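(* For any weighted finite graph $G$ with $N$ vertices and each $1\leq k\leq N$, \[ \overline{h}(k)\geq\frac{1}{2}\bigl(1-h(k)\bigr). \]
   Context: $G=(V,E,w)$ is a finite undirected graph without self-loops, $N=|V|$, positive symmetric edge weights $w_{uv}$ ($w_{uv}=0$ for non-edges), degrees $d_u=\sum_v w_{uv}$ (implicitly positive). $|E(A,B)|:=\sum_{u\in A,v\in B}w_{uv}$, $\mathrm{vol}(A):=\sum_{u\in A}d_u$, $\overline{A}=V\setminus A$. For nonempty $S$, $\phi(S):=|E(S,\overline{S})|/\mathrm{vol}(S)$; $h(k):=\min\max_{1\leq i\leq k}\phi(S_i)$ over all collections of $k$ nonempty pairwise disjoint subsets of $V$. For disjoint $V_1,V_2$ with $V_1\cup V_2\neq\emptyset$, $\overline{\phi}(V_1,V_2):=2|E(V_1,V_2)|/\mathrm{vol}(V_1\cup V_2)$; $\overline{h}(k):=\max\min_{1\leq i\leq k}\overline{\phi}(V_{2i-1},V_{2i})$ over all collections of $k$ pairs $(V_1,V_2),\ldots,(V_{2k-1},V_{2k})$ of pairwise disjoint subsets of $V$ with $V_{2i-1}\cup V_{2i}\neq\emptyset$ for each $i$. *)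

From HB Require Import structures.
From mathcomp Require Import all_boot all_order all_algebra.
Set Implicit Arguments. Unset Strict Implicit. Unset Printing Implicit Defensive.
Import Order.TTheory GRing.Theory Num.Theory.
Local Open Scope ring_scope.

Section Defs.
Variables (R : realFieldType) (V : finType) (w : V -> V -> R).

(* minimum / maximum of a finite NONEMPTY list of reals
   (the default value head 0 s is an element of s, so it is harmless) *)
Definition seq_min (s : seq R) : R := \big[Num.min/head 0 s]_(x <- s) x.
Definition seq_max (s : seq R) : R := \big[Num.max/head 0 s]_(x <- s) x.

Definition deg (u : V) : R := \sum_(v : V) w u v.
Definition cut (A B : {set V}) : R := \sum_(u in A) \sum_(v in B) w u v.
Definition vol (A : {set V}) : R := \sum_(u in A) deg u.
Definition phi (S : {set V}) : R := cut S (~: S) / vol S.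
Definition phibar (A B : {set V}) : R := 2 * cut A B / vol (A :|: B).

Definition adm_h (k : nat) (F : {ffun 'I_k -> {set V}}) : bool :=
  [forall i, F i != set0] &&
  [forall i, forall j, (i != j) ==> [disjoint F i & F j]].

Definition hk (k : nat) : R :=
  seq_min [seq seq_max [seq phi (F i) | i <- enum 'I_k]
          | F : {ffun 'I_k -> {set V}} <- enum (@adm_h k)].

(* k pairs (V_{2i-1}, V_{2i}) = ((P i).1, (P i).2); all 2k sets pairwise
   disjoint, and each union nonempty *)
Definition adm_hbar (k : nat) (P : {ffun 'I_k -> {set V} * {set V}}) : bool :=
  [forall i, ((P i).1 :|: (P i).2) != set0] &&
  [forall i, [disjoint (P i).1 & (P i).2]] &&
  [forall i, forall j, (i != j) ==>
     [&& [disjoint (P i).1 & (P j).1], [disjoint (P i).1 & (P j).2],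
         [disjoint (P i).2 & (P j).1] & [disjoint (P i).2 & (P j).2]]].

Definition hbark (k : nat) : R :=
  seq_max [seq seq_min [seq phibar (P i).1 (P i).2 | i <- enum 'I_k]
          | P : {ffun 'I_k -> {set V} * {set V}} <- enum (@adm_hbar k)].

End Defs.

From HB Require Import structures.
From mathcomp Require Import all_boot all_order all_algebra.
From mathcomp Require Import lra.
Import Order.TTheory GRing.Theory Num.Theory.
Set Implicit Arguments. Unset Strict Implicit. Unset Printing Implicit Defensive.
Local Open Scope ring_scope.

(* Split each set S_i of an admissible collection S_1, ..., S_k by a maximum
   cut (T_i, S_i \ T_i) of its induced subgraph. A maximum cut is locally
   optimal: moving one vertex across does not help, so every vertex sends at
   least half of its inner weight across, whence
   4|E(T_i, S_i \ T_i)| >= |E(S_i, S_i)|. Since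
   vol(S_i) = |E(S_i, S_i)| + |E(S_i, ~S_i)|, this reads
   phibar(T_i, S_i \ T_i) >= (1 - phi(S_i)) / 2, so the k pairs witness
   hbar(k) >= (1 - max_i phi(S_i)) / 2; minimize over the collection. *)

Lemma setUD_sub (T : finType) (A B : {set T}) : B \subset A -> B :|: A :\: B = A.
Proof. by move=> BA; rewrite -{2}(setID A B) (setIidPr BA). Qed.

Section Cut.
Variables (R : realFieldType) (V : finType) (w : V -> V -> R).
Hypothesis w_sym : forall u v, w u v = w v u.
Hypothesis w_noloop : forall u, w u u = 0.

Local Notation cut := (cut w).
Implicit Types A B C S T : {set V}.

Lemma cut_sym A B : cut A B = cut B A.
Proof.
by rewrite /cut exchange_big; apply: eq_bigr => u _; apply: eq_bigr => v _.
Qed.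

Lemma cutUl A B C : [disjoint A & B] -> cut (A :|: B) C = cut A C + cut B C.
Proof.
move=> dAB; rewrite /cut -bigU //; apply: eq_bigl => u; exact: in_setU.
Qed.

Lemma cutUr A B C : [disjoint B & C] -> cut A (B :|: C) = cut A B + cut A C.
Proof. by move=> dBC; rewrite cut_sym cutUl // !(cut_sym A). Qed.

Lemma cutD1l A B u : u \in A -> cut A B = \sum_(v in B) w u v + cut (A :\ u) B.
Proof. exact: big_setD1. Qed.

Lemma cutU1r A B u : u \notin B -> cut A (u |: B) = \sum_(v in A) w u v + cut A B.
Proof.
move=> uB; rewrite /cut -big_split; apply: eq_bigr => a _.
by rewrite big_setU1 // w_sym.
Qed.

Lemma cut_move A B u : u \in A -> u \notin B ->
  cut (A :\ u) (u |: B) = cut A B - \sum_(v in B) w u v + \sum_(v in A) w u v.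
Proof.
move=> uA uB; rewrite cutU1r // (cutD1l B uA) (big_setD1 _ uA) /= w_noloop.
lra.
Qed.

Lemma vol_cut S : vol w S = cut S S + cut S (~: S).
Proof.
rewrite /vol /cut -big_split; apply: eq_bigr => u _.
rewrite /deg (bigID (mem S)) /=; congr (_ + _).
by apply: eq_bigl => v; rewrite inE.
Qed.

Section LocallyMaximalCut.
Variables S T : {set V}.
Hypothesis TS : T \subset S.
Hypothesis T_max : forall T', T' \subset S -> cut T' (S :\: T') <= cut T (S :\: T).

Lemma cut_inner_le_cross : cut T T <= cut T (S :\: T).
Proof.
apply: ler_sum => u uT.
have uS : u \in S := subsetP TS u uT.
have := T_max (subset_trans (subD1set T u) TS).
have -> : S :\: (T :\ u) = u |: (S :\: T).
  by apply/setP => x; rewrite !inE; case: eqP => // ->; rewrite uT uS.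
rewrite cut_move // ?inE ?uT //; lra.
Qed.

End LocallyMaximalCut.

Lemma cut_le_4cross S T : T \subset S ->
  (forall T', T' \subset S -> cut T' (S :\: T') <= cut T (S :\: T)) ->
  cut S S <= 4 * cut T (S :\: T).
Proof.
move=> TS T_max.
have SDDT : S :\: (S :\: T) = T by rewrite setDDr setDv set0U (setIidPr TS).
have dT : [disjoint T & S :\: T].
  by rewrite disjoint_subset; apply/subsetP => x xT; rewrite !inE xT.
have SE : S = T :|: (S :\: T) by rewrite setUD_sub.
have inT := cut_inner_le_cross TS T_max.
have inST : cut (S :\: T) (S :\: T) <= cut T (S :\: T).
  have := @cut_inner_le_cross S (S :\: T) (subsetDl _ _).
  rewrite SDDT (cut_sym _ T); apply=> T0 T0S; exact: T_max.
rewrite {1 2}SE (cutUl _ dT) !(cutUr _ dT) (cut_sym (S :\: T) T); lra.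
Qed.

Definition maxcut_part S : {set V} :=
  [arg max_(T > S | T \subset S) cut T (S :\: T)]%O.

Lemma maxcut_part_sub S : maxcut_part S \subset S.
Proof. by rewrite /maxcut_part; case: arg_maxP. Qed.

Lemma cut_le_4maxcut S : cut S S <= 4 * cut (maxcut_part S) (S :\: maxcut_part S).
Proof. by rewrite /maxcut_part; case: arg_maxP => // T; apply: cut_le_4cross. Qed.

Hypothesis deg_pos : forall u, 0 < deg w u.

Lemma vol_gt0 S : S != set0 -> 0 < vol w S.
Proof.
case/set0Pn => u uS; rewrite /vol (big_setD1 _ uS) /= ltr_pwDl ?deg_pos //.
by apply: sumr_ge0 => v _; apply: ltW.
Qed.

Lemma phibar_maxcut_ge S : S != set0 ->
  (1 - phi w S) / 2 <= phibar w (maxcut_part S) (S :\: maxcut_part S).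
Proof.
move=> S0; have volS := vol_gt0 S0; have TS := maxcut_part_sub S.
have := cut_le_4maxcut S; have := vol_cut S.
rewrite /phibar setUD_sub // /phi ler_pdivlMr // mulrAC mulrBl mul1r divfK ?gt_eqF //.
lra.
Qed.

End Cut.

Section SeqMinMax.
Variable R : realFieldType.
Implicit Types (s : seq R) (x c : R).

Lemma le_seq_max s x : x \in s -> x <= seq_max s.
Proof. by move=> xs; apply: le_bigmax_seq. Qed.

Lemma le_seq_min s c : s != [::] -> {in s, forall x, c <= x} -> c <= seq_min s.
Proof.
case: s => // x s _ cs; rewrite /seq_min big_seq_cond.
by apply: le_bigmin => [|y /andP[/cs]]; first exact/cs/mem_head.
Qed.

End SeqMinMax.

Section Collections.
Variables (V : finType) (k : nat).

Lemma adm_h_exists : (k <= #|V|)%N -> exists F : {ffun 'I_k -> {set V}}, adm_h F.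
Proof.
move=> k_leN; pose v i := enum_val (widen_ord k_leN i).
exists [ffun i => [set v i]]; apply/andP; split; apply/forallP => i.
  by rewrite ffunE; apply/set0Pn; exists (v i); rewrite inE.
apply/forallP => j; apply/implyP; apply: contraNT.
rewrite !ffunE disjoints1 inE negbK => /eqP /enum_val_inj /(congr1 val) eij.
by apply/eqP/val_inj.
Qed.

Lemma adm_hbar_split (F : {ffun 'I_k -> {set V}}) (T : 'I_k -> {set V}) :
  adm_h F -> (forall i, T i \subset F i) ->
  adm_hbar [ffun i => (T i, F i :\: T i)].
Proof.
case/andP => /forallP F0 /forallP Fdis TF.
apply/andP; split; first (apply/andP; split); apply/forallP => i; rewrite ?ffunE /=.
- by rewrite setUD_sub ?TF ?F0.
- by rewrite disjoint_subset; apply/subsetP => x xT; rewrite !inE xT.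
apply/forallP => j; apply/implyP => ij; rewrite !ffunE /=.
have dij : [disjoint F i & F j] by have /forallP/(_ j) := Fdis i; rewrite ij.
by rewrite !(disjointW _ _ dij) ?subsetDl.
Qed.

End Collections.

Lemma hbark_ge_maxcut_split (R : realFieldType) (V : finType) (w : V -> V -> R)
  (w_sym : forall u v, w u v = w v u) (w_noloop : forall u, w u u = 0)
  (deg_pos : forall u, 0 < deg w u) (k : nat) (F : {ffun 'I_k -> {set V}}) :
  (0 < k)%N -> adm_h F ->
  (1 - seq_max [seq phi w (F i) | i <- enum 'I_k]) / 2 <= hbark w k.
Proof.
move=> k_gt0 Fadm.
have Padm := adm_hbar_split Fadm (fun i => maxcut_part_sub w (F i)).
apply: le_trans (le_seq_max (map_f _ _)); last by rewrite mem_enum; exact: Padm.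
apply: le_seq_min => [|_ /mapP[i _ ->]]; first by rewrite -size_eq0 size_map size_enum_ord -lt0n.
rewrite ffunE /=; apply: le_trans (phibar_maxcut_ge w_sym w_noloop deg_pos _); last first.
  by case/andP: Fadm => /forallP.
have : phi w (F i) <= seq_max [seq phi w (F i) | i <- enum 'I_k].
  exact/le_seq_max/map_f/mem_enum.
lra.
Qed.

Theorem proposition3p5 (R : realFieldType) (V : finType) (w : V -> V -> R)
  (w_sym : forall u v, w u v = w v u)
  (w_ge0 : forall u v, 0 <= w u v)
  (w_noloop : forall u, w u u = 0)
  (deg_pos : forall u, 0 < deg w u)
  (k : nat) (k_ge1 : (1 <= k)%N) (k_leN : (k <= #|V|)%N) :
  (1 - hk w k) / 2 <= hbark w k.
Proof.
suff : 1 - 2 * hbark w k <= hk w k by lra.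
have [F0 F0adm] := adm_h_exists k_leN.
apply: le_seq_min => [|x /mapP[F]]; last rewrite mem_enum => Fadm ->.
  by rewrite -size_eq0 size_map -cardE -lt0n; apply/card_gt0P; exists F0.
have := hbark_ge_maxcut_split w_sym w_noloop deg_pos k_ge1 Fadm; lra.
Qed.
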